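(* For positive integers $m,n$ and $h$ with $m \ge h$ and $n\ge h$, \[ \sum_{k=0}^{h} q^{(n-k)(h-k)} \left( \overline{{ n \brack k}}_{q,t} \overline{{ m \brack h-k}}_{q,t} + t\, \overline{{ n-1 \brack k}}_{q,t} \overline{{ m-1 \brack h-k-1}}_{q,t} \right) = \overline{ {m+n \brack h}}_{q,t}. \]
   Context: An overpartition is a partition in which the last occurrence of each distinct part size may be overlined; its weight $|\lambda|$ is the sum of its parts. For integers $0\le b\le a$, $\overline{{a \brack b}}_{q,t}=\sum_{\lambda} t^{\#_o(\lambda)} q^{|\lambda|}$, the sum over all overpartitions $\lambda$ with largest part at most $a-b$ and at most $b$ parts, $\#_o(\lambda)$ being the number of overlined parts; for other integer pairs $(a,b)$ (e.g. $b<0$ or $b>a$) it is $0$. *)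

From mathcomp Require Import all_boot all_order all_algebra.
Set Implicit Arguments. Unset Strict Implicit. Unset Printing Implicit Defensive.
Import Order.TTheory GRing.Theory Num.Theory.
Local Open Scope ring_scope.

(* An overpartition with all parts in {1..N} is encoded by its multiplicity
   function m : 'I_N -> nat (part size i.+1 occurs m i times) together with
   overline flags o : 'I_N -> bool, where o i means that (the last occurrence
   of) part i.+1 is overlined; this is only allowed if m i > 0.
   "At most b parts" means \sum_i m i <= b (hence each m i <= b, so m can be
   taken in 'I_b.+1). *)
Definition ovgauss_nat (R : comRingType) (q t : R) (N b : nat) : R :=
  \sum_(p : {ffun 'I_N -> 'I_b.+1} * {ffun 'I_N -> bool}
         | ((\sum_(i < N) (p.1 i : nat))%N <= b)%N
           && [forall i, p.2 i ==> (0 < p.1 i)%N])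
     t ^+ #|[set i | p.2 i]| * q ^+ (\sum_(i < N) (i.+1 * p.1 i))%N.

(* overline{[a, b]}_{q,t}: overpartitions with largest part <= a - b and at
   most b parts when 0 <= b <= a; zero for all other integer pairs. *)
Definition ovgauss (R : comRingType) (q t : R) (a b : int) : R :=
  if (0 <= b) && (b <= a) then ovgauss_nat q t `|a - b|%N `|b|%N else 0.

From mathcomp Require Import all_boot all_order all_algebra zify ring.
Set Implicit Arguments. Unset Strict Implicit. Unset Printing Implicit Defensive.
Import Order.TTheory GRing.Theory Num.Theory.
Local Open Scope ring_scope.

(* Write G(a, b) for the overpartition Gaussian polynomial.  Splitting off the
   multiplicity x of the largest allowed part size N + 1, which contributes
   q^((N+1)x) (1 + [x > 0] t), gives a convolution recurrence for G and from it
   the Pascal rule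
     G(a+1, b) = G(a, b) + q^(a+1-b) (G(a, b-1) + t G(a-1, b-1)).
   The k-th summand of the left-hand side is built from G(m, h-k) and
   G(m-1, h-k-1), which both obey this rule in m; since the powers of q match
   wherever the summand is nonzero, the left-hand side satisfies the same
   three-term recurrence in m as G(m+n, h).  Both sides agree for m = 0, 1 and
   for h = 0, hence everywhere. *)

Section FfunRcons.
Variables (T : Type) (N : nat).

Definition ffun_rcons (f : {ffun 'I_N -> T}) (x : T) : {ffun 'I_N.+1 -> T} :=
  [ffun i => if unlift ord_max i is Some j then f j else x].

Definition ffun_init (f : {ffun 'I_N.+1 -> T}) : {ffun 'I_N -> T} :=
  [ffun j => f (lift ord_max j)].

Lemma ffun_rcons_lift f x j : ffun_rcons f x (lift ord_max j) = f j.
Proof. by rewrite ffunE liftK. Qed.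

Lemma ffun_rcons_max f x : ffun_rcons f x ord_max = x.
Proof. by rewrite ffunE unlift_none. Qed.

Lemma ffun_rconsK f x : ffun_init (ffun_rcons f x) = f.
Proof. by apply/ffunP => j; rewrite ffunE ffun_rcons_lift. Qed.

Lemma ffun_initK f : ffun_rcons (ffun_init f) (f ord_max) = f.
Proof.
by apply/ffunP => i; rewrite ffunE; case: unliftP => [j ->|->] //; rewrite ffunE.
Qed.

Lemma big_ffun_rcons (F : nat -> T -> nat) f x :
  (\sum_(i < N.+1) F i (ffun_rcons f x i) = \sum_(i < N) F i (f i) + F N x)%N.
Proof.
rewrite big_ord_recr ffun_rcons_max; congr (_ + _)%N; apply: eq_bigr => i _.
congr (F _ _); rewrite (_ : widen_ord _ i = lift ord_max i) ?ffun_rcons_lift //.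
by apply: ord_inj; rewrite lift_max.
Qed.

End FfunRcons.

Lemma big_ffun_pair_rcons (V : nmodType) (A B : finType) (N : nat)
    (F : {ffun 'I_N.+1 -> A} * {ffun 'I_N.+1 -> B} -> V) :
  \sum_p F p
  = \sum_(p : {ffun 'I_N -> A} * {ffun 'I_N -> B}) \sum_(x : A) \sum_(y : B)
      F (ffun_rcons p.1 x, ffun_rcons p.2 y).
Proof.
under [RHS]eq_bigr do rewrite pair_bigA.
rewrite pair_bigA /= (reindex (fun z => (ffun_rcons z.1.1 z.2.1, ffun_rcons z.1.2 z.2.2))) //=.
exists (fun p => ((ffun_init p.1, ffun_init p.2), (p.1 ord_max, p.2 ord_max))).
  by move=> [[f o] [x y]] _; rewrite /= !ffun_rconsK !ffun_rcons_max.
by move=> [f o] _; rewrite /= !ffun_initK.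
Qed.

Lemma card_ffun_rcons N (o : {ffun 'I_N -> bool}) y :
  #|[set i | ffun_rcons o y i]| = (#|[set i | o i]| + y)%N.
Proof.
have card_sum n (P : pred 'I_n) : #|[set i | P i]| = (\sum_i P i)%N.
  by rewrite -[LHS]muln1 -sum_nat_cond_const big_mkcond.
by rewrite !card_sum (big_ffun_rcons (fun _ (b : bool) => b : nat)).
Qed.

Local Notation ovpart c N := ({ffun 'I_N -> 'I_c.+1} * {ffun 'I_N -> bool})%type.

Section OverpartitionGaussian.
Variables (R : comNzRingType) (q t : R).

Definition ovadmissible c N (b : nat) (p : ovpart c N) :=
  ((\sum_(i < N) (p.1 i : nat))%N <= b)%N && [forall i, p.2 i ==> (0 < p.1 i)%N].

Definition ovweight c N (p : ovpart c N) : R :=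
  t ^+ #|[set i | p.2 i]| * q ^+ (\sum_(i < N) (i.+1 * p.1 i))%N.

(* [ovgauss_nat] with multiplicities drawn from ['I_c.+1] instead of ['I_b.+1]:
   unlike [b], the cap [c] stays fixed in the recursion on [N], and it is
   irrelevant as soon as [b <= c] ([ovgauss_capE]). *)
Definition ovgauss_cap (c N b : nat) : R :=
  \sum_(p : ovpart c N | ovadmissible b p) ovweight p.

Definition part_weight (N x : nat) : R := q ^+ (N.+1 * x) * (1 + t *+ (0 < x)%N).

Lemma ovadmissible_rcons c N b (p : ovpart c N) (x : 'I_c.+1) y :
  ovadmissible b (ffun_rcons p.1 x, ffun_rcons p.2 y)
  = [&& x <= b, ovadmissible (b - x) p & y ==> (0 < x)]%N.
Proof.
case: p => f o; rewrite /ovadmissible /= (big_ffun_rcons (fun _ (z : 'I_c.+1) => z : nat)).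
have -> : [forall i, ffun_rcons o y i ==> (0 < ffun_rcons f x i)%N]
          = [forall i, o i ==> (0 < f i)%N] && (y ==> (0 < x)%N).
  apply/forallP/andP => [ok|[/forallP ok y_x] i].
    split; last by have := ok ord_max; rewrite !ffun_rcons_max.
    by apply/forallP => j; have := ok (lift ord_max j); rewrite !ffun_rcons_lift.
  by case: (unliftP ord_max i) => [j ->|->]; rewrite ?ffun_rcons_lift ?ffun_rcons_max.
case: (leqP x b) => [le_xb | lt_bx] /=; first by rewrite leq_subRL // addnC andbA.
by rewrite ltn_geF // ltn_addl.
Qed.

Lemma ovweight_rcons c N (p : ovpart c N) (x : 'I_c.+1) (y : bool) :
  ovweight (ffun_rcons p.1 x, ffun_rcons p.2 y)
  = ovweight p * (t ^+ y * q ^+ (N.+1 * x)).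
Proof.
case: p => f o; rewrite /ovweight /= card_ffun_rcons.
rewrite (big_ffun_rcons (fun i (z : 'I_c.+1) => (i.+1 * z)%N)).
by rewrite !exprD mulrACA.
Qed.

Lemma ovgauss_capS c N b :
  ovgauss_cap c N.+1 b
  = \sum_(x < c.+1 | (x <= b)%N) part_weight N x * ovgauss_cap c N (b - x).
Proof.
rewrite /ovgauss_cap big_mkcond big_ffun_pair_rcons exchange_big [RHS]big_mkcond /=.
apply: eq_bigr => x _.
under eq_bigr => p _ do rewrite big_bool /= !ovadmissible_rcons !ovweight_rcons.
case: ifPn => _; last by rewrite big1 // => p _; rewrite addr0.
rewrite [in RHS]big_mkcond mulr_sumr; apply: eq_bigr => p _.
by rewrite /part_weight; case: ovadmissible; case: posnP => [->|_] /=; ring.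
Qed.

Lemma ovgauss_cap0 c b : ovgauss_cap c 0 b = 1.
Proof.
rewrite /ovgauss_cap (eq_bigl xpredT) => [|p]; last first.
  by rewrite /ovadmissible big_ord0; apply/forallP => -[].
rewrite (eq_bigr (fun=> 1)) => [|p _]; last first.
  rewrite /ovweight big_ord0 (_ : [set i | p.2 i] = set0) ?cards0 ?mulr1 //.
  by apply/setP => -[].
by rewrite sumr_const card_prod !card_ffun !card_ord.
Qed.

Lemma ovgauss_capS_le c N b : (b <= c)%N ->
  ovgauss_cap c N.+1 b = \sum_(x < b.+1) part_weight N x * ovgauss_cap c N (b - x).
Proof.
move=> le_bc; rewrite ovgauss_capS.
by rewrite (big_ord_widen c.+1 (fun x => part_weight N x * ovgauss_cap c N (b - x))).
Qed.

Lemma ovgauss_capE c N b : (b <= c)%N -> ovgauss_cap c N b = ovgauss_nat q t N b.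
Proof.
elim: N b c => [|N IH] b c le_bc.
  by rewrite -[ovgauss_nat _ _ _ _]/(ovgauss_cap b 0 b) !ovgauss_cap0.
rewrite -[ovgauss_nat _ _ _ _]/(ovgauss_cap b N.+1 b) !ovgauss_capS_le //.
by apply: eq_bigr => x _; rewrite !IH ?leq_subr // (leq_trans (leq_subr x b)).
Qed.

Lemma ovgauss_natS N b :
  ovgauss_nat q t N.+1 b = \sum_(x < b.+1) part_weight N x * ovgauss_nat q t N (b - x).
Proof.
rewrite -(ovgauss_capE N.+1 (leqnn b)) ovgauss_capS_le //.
by apply: eq_bigr => x _; rewrite ovgauss_capE ?leq_subr.
Qed.

Lemma ovgauss_nat0n b : ovgauss_nat q t 0 b = 1.
Proof. exact: ovgauss_cap0. Qed.

Lemma part_weight0 N : part_weight N 0 = 1.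
Proof. by rewrite /part_weight muln0 expr0 mul1r addr0. Qed.

Lemma part_weightS N x :
  part_weight N x.+1 = q ^+ N.+1 * (part_weight N x + t *+ (x == 0)%N).
Proof.
by rewrite /part_weight mulnS exprD; case: x => [|x] /=; rewrite ?muln0 ?mulr0n ?mulr1n; ring.
Qed.

Lemma ovgauss_natn0 N : ovgauss_nat q t N 0 = 1.
Proof.
by elim: N => [|N IH]; rewrite ?ovgauss_nat0n // ovgauss_natS big_ord1 part_weight0 IH mul1r.
Qed.

Lemma ovgauss_natSS N b :
  ovgauss_nat q t N.+1 b.+1
  = ovgauss_nat q t N b.+1 + q ^+ N.+1 * (ovgauss_nat q t N.+1 b + t * ovgauss_nat q t N b).
Proof.
rewrite !ovgauss_natS big_ord_recl part_weight0 mul1r subn0; congr (_ + _).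
under eq_bigr do rewrite lift0 subSS part_weightS -mulrA mulrDl.
rewrite -mulr_sumr big_split /=; congr (_ * (_ + _)).
rewrite big_ord_recl subn0 mulr1n big1 ?addr0 // => i _.
by rewrite lift0 mulr0n mul0r.
Qed.

Lemma ovgauss_out (a b : int) : (b < 0) || (a < b) -> ovgauss q t a b = 0.
Proof. by rewrite /ovgauss => /orP[|] /lt_geF ->; rewrite ?andbF. Qed.

Ltac ovgauss_vanish :=
  repeat match goal with
  | |- context [ovgauss q t ?a ?b] => rewrite (@ovgauss_out a b); last by lia
  end.

Lemma ovgauss_addn (N b : nat) : ovgauss q t (N + b)%N%:Z b%:Z = ovgauss_nat q t N b.
Proof. by rewrite /ovgauss le0z_nat lez_nat leq_addl; congr ovgauss_nat; lia. Qed.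

Lemma ovgauss_n0 n : ovgauss q t n%:Z 0%:Z = 1.
Proof. by rewrite -[n]addn0 ovgauss_addn ovgauss_natn0. Qed.

Lemma ovgauss_nn n : ovgauss q t n%:Z n%:Z = 1.
Proof. by rewrite -(ovgauss_nat0n n); exact: ovgauss_addn 0 n. Qed.

Lemma ovgaussS (a : nat) (b : int) :
  ovgauss q t a.+1%:Z b
  = ovgauss q t a%:Z b
    + q ^+ (a.+1 - `|b|) * (ovgauss q t a%:Z (b - 1) + t * ovgauss q t (a%:Z - 1) (b - 1)).
Proof.
case: b => [[|b]|b]; last by ovgauss_vanish; ring.
  by rewrite !ovgauss_n0; ovgauss_vanish; ring.
have -> : b.+1%:Z - 1 = b%:Z by lia.
case: (ltngtP a b) => [lt_ab | lt_ba | <-]; first by ovgauss_vanish; ring.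
  have [N ->] : exists N, a = (N.+1 + b)%N by exists (a - b.+1)%N; rewrite addSnnS subnK.
  have -> : (N.+1 + b)%N%:Z - 1 = (N + b)%N%:Z by lia.
  have -> : ((N.+1 + b).+1 - `|b.+1%:Z|)%N = N.+1 by lia.
  rewrite (ovgauss_addn N.+1 b) (ovgauss_addn N b) -addnS (ovgauss_addn N.+1 b.+1).
  rewrite addSnnS (ovgauss_addn N b.+1).
  exact: ovgauss_natSS.
rewrite !ovgauss_nn subnn; ovgauss_vanish; ring.
Qed.

Lemma ovgaussSS (a b : nat) :
  ovgauss q t a.+2%:Z b.+1%:Z
  = ovgauss q t a.+1%:Z b.+1%:Z
    + q ^+ (a.+1 - b) * (ovgauss q t a.+1%:Z b%:Z + t * ovgauss q t a%:Z b%:Z).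
Proof.
rewrite ovgaussS.
have -> : b.+1%:Z - 1 = b%:Z by lia.
by have -> : a.+1%:Z - 1 = a%:Z by lia.
Qed.

Definition vandermonde_term (n m h k : nat) : R :=
  q ^+ ((n - k) * (h - k)) *
  (ovgauss q t n%:Z k%:Z * ovgauss q t m%:Z (h%:Z - k%:Z)
   + t * (ovgauss q t (n%:Z - 1) k%:Z * ovgauss q t (m%:Z - 1) (h%:Z - k%:Z - 1))).

Definition vandermonde_sum (n m h : nat) : R := \sum_(k < h.+1) vandermonde_term n m h k.

Lemma vandermonde_termS n m h k :
  vandermonde_term n m.+2 h.+1 k
  = vandermonde_term n m.+1 h.+1 k
    + q ^+ (m.+1 + n - h) * (vandermonde_term n m.+1 h k + t * vandermonde_term n m h k).
Proof.
rewrite /vandermonde_term.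
have -> : m.+2%:Z - 1 = m.+1%:Z by lia.
have -> : h%:Z - k%:Z = h.+1%:Z - k%:Z - 1 by lia.
set d := h.+1%:Z - k%:Z.
rewrite [in LHS](ovgaussS m (d - 1)) [in LHS](ovgaussS m.+1 d).
have -> : m.+1%:Z - 1 = m%:Z by lia.
(* Outside this range the truncated exponents disagree, but every term
   carrying them vanishes. *)
have [lt_nk | le_kn] := ltnP n k; first by ovgauss_vanish; ring.
have [lt_hk | le_kh] := ltnP h k; first by ovgauss_vanish; ring.
have [lt_mkh | le_hmk] := ltnP (m.+1 + k) h; first by ovgauss_vanish; ring.
have -> : ((n - k) * (h.+1 - k) = (n - k) * (h - k) + (n - k))%N.
  by rewrite subSn // mulnS addnC.
have -> : (m.+1 - `|(d - 1)%R|)%N = (m.+2 - `|d|)%N by lia.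
have -> : (m.+1 + n - h = (n - k) + (m.+2 - `|d|))%N by lia.
by rewrite !exprD; ring.
Qed.

Lemma vandermonde_sum_widen n m h :
  \sum_(k < h.+2) vandermonde_term n m h k = vandermonde_sum n m h.
Proof.
rewrite big_ord_recr /= [X in _ + X]/vandermonde_term.
by ovgauss_vanish; rewrite !(mulr0, addr0).
Qed.

Lemma vandermonde_sumS n m h :
  vandermonde_sum n m.+2 h.+1
  = vandermonde_sum n m.+1 h.+1
    + q ^+ (m.+1 + n - h) * (vandermonde_sum n m.+1 h + t * vandermonde_sum n m h).
Proof.
rewrite /vandermonde_sum; under eq_bigr do rewrite vandermonde_termS.
by rewrite big_split -mulr_sumr big_split -mulr_sumr /= !vandermonde_sum_widen.
Qed.

Lemma vandermonde_sum_h0 n m : vandermonde_sum n m 0 = 1.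
Proof.
rewrite /vandermonde_sum big_ord1 /vandermonde_term subrr.
by ovgauss_vanish; rewrite !ovgauss_n0 muln0 expr0 !(mulr0, mulr1, addr0).
Qed.

Lemma vandermonde_sum_m0 n h : vandermonde_sum n 0 h = ovgauss q t n%:Z h%:Z.
Proof.
rewrite /vandermonde_sum big_ord_recr big1 /= => [|[k lt_kh] _].
  by rewrite /vandermonde_term subrr subnn muln0 ovgauss_n0; ovgauss_vanish; ring.
by rewrite /vandermonde_term /=; ovgauss_vanish; ring.
Qed.

Lemma vandermonde_sum_m1 n h : vandermonde_sum n 1 h = ovgauss q t n.+1%:Z h%:Z.
Proof.
case: h => [|h]; first by rewrite vandermonde_sum_h0 ovgauss_n0.
rewrite /vandermonde_sum !big_ord_recr big1 /= => [|[k lt_kh] _]; last first.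
  by rewrite /vandermonde_term /=; ovgauss_vanish; ring.
rewrite /vandermonde_term /= [RHS]ovgaussS subnn muln0 subSnn muln1.
have -> : h.+1%:Z - h%:Z = 1 by lia.
have -> : h.+1%:Z - 1 = h%:Z by lia.
rewrite !subrr !ovgauss_n0 (ovgauss_nn 1) [absz _]/= subSS.
by ovgauss_vanish; ring.
Qed.

End OverpartitionGaussian.

Theorem proposition4p2 (R : comRingType) (q t : R) (m n h : nat) :
  (0 < m)%N -> (0 < n)%N -> (0 < h)%N -> (h <= m)%N -> (h <= n)%N ->
  \sum_(k < h.+1)
     q ^+ ((n - k) * (h - k))%N *
     (ovgauss q t n%:Z k%:Z * ovgauss q t m%:Z (h%:Z - k%:Z)
      + t * (ovgauss q t (n%:Z - 1) k%:Z * ovgauss q t (m%:Z - 1) (h%:Z - k%:Z - 1)))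
  = ovgauss q t (m + n)%N%:Z h%:Z.
Proof.
(* The identity holds for all m, n, h. *)
move=> _ _ _ _ _.
suff vandermonde i : (forall j, vandermonde_sum q t n i j = ovgauss q t (i + n)%N%:Z j%:Z)
                  /\ (forall j, vandermonde_sum q t n i.+1 j = ovgauss q t (i.+1 + n)%N%:Z j%:Z).
  exact: (vandermonde m).1 h.
elim: i => [|i [IHi IHi1]].
  by split=> j; [exact: vandermonde_sum_m0 | exact: vandermonde_sum_m1].
split=> // -[|j]; first by rewrite vandermonde_sum_h0 ovgauss_n0.
by rewrite vandermonde_sumS !IHi1 IHi; symmetry; exact: ovgaussSS.
Qed.
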